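(* Let $\kappa\in\mathbb{N}$ with $\kappa\ge2$ and let $\mathsf{A}\in\mathscr{M}_\kappa^+$, with $(a,b,c)\in\mathbb{R}^3$ such that $\mathsf{A}=\mathsf{M}_\kappa(a,b,c)$. Then $a>\max\{|b|,|c|\}$, and the functions $f(a,b,c)=\frac{b(a-c)}{a^2-b^2}$ and $g(a,b,c)=\frac{ac-b^2}{a^2-b^2}$ satisfy $|f(a,b,c)|\le2$ and $|g(a,b,c)|\le1$.
   Context: $\mathsf{M}_\kappa(a,b,c)$ is the $(1+\kappa)\times(1+\kappa)$ matrix indexed by $\{0,\dots,\kappa\}$ with $(i,j)$ entry $a$ if $i=j$, $b$ if $i\neq j$ and ($i=0$ or $j=0$), and $c$ otherwise. $\mathscr{M}_\kappa^+$ is the set of positive definite matrices of the form $\mathsf{M}_\kappa(a,b,c)$. *)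

From HB Require Import structures.
From mathcomp Require Import all_boot all_order all_algebra.
From mathcomp Require Import all_classical all_reals.
Set Implicit Arguments. Unset Strict Implicit. Unset Printing Implicit Defensive.
Import Order.TTheory GRing.Theory Num.Theory.
Local Open Scope ring_scope.

Definition Mk (R : ringType) (kappa : nat) (a b c : R) : 'M[R]_(kappa.+1) :=
  \matrix_(i, j) (if i == j then a
                  else if (i == ord0) || (j == ord0) then b else c).

Definition posdef (R : realFieldType) (n : nat) (A : 'M[R]_n) : Prop :=
  A^T = A /\ forall x : 'cV[R]_n, x != 0 -> 0 < (x^T *m A *m x) 0 0.

Definition Mkplus (R : realFieldType) (kappa : nat) (A : 'M[R]_(kappa.+1)) : Prop :=
  posdef A /\ exists a b c : R, A = Mk kappa a b c.

From HB Require Import structures.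
From mathcomp Require Import all_boot all_order all_algebra.
From mathcomp Require Import all_classical all_reals.
From mathcomp Require Import ring lra.
Set Implicit Arguments. Unset Strict Implicit. Unset Printing Implicit Defensive.
Import Order.TTheory GRing.Theory Num.Theory.
Local Open Scope ring_scope.

(* Positive definiteness of M(a,b,c) is only tested on vectors supported on the
   indices 0, 1, 2, where the quadratic form is
   Q(u,v,w) = a(u^2+v^2+w^2) + 2b(uv+uw) + 2cvw.  The vectors e1, e1+-e2,
   e0+-e1 give a > |b| and a > |c|, and (-2b, a, a) gives
   Q = 2a(a^2 + ac - 2b^2) > 0.  With 0 < a - c and |b| < a this yields
   |b|(a-c) <= a(a-c) < 2(a^2-b^2) and -(a^2-b^2) < ac - b^2 <= a^2 - b^2. *)

Definition col3 (R : pzRingType) (k : nat) (u v w : R) : 'cV[R]_(k.+3) :=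
  \col_i [:: u; v; w]`_i.

Lemma col3_eq0 (R : pzRingType) (k : nat) (u v w : R) :
  (col3 k u v w == 0) = [&& u == 0, v == 0 & w == 0].
Proof.
apply/eqP/and3P => [h | [/eqP-> /eqP-> /eqP->]].
  have at_i (i : 'I_k.+3) : col3 k u v w i 0 = 0 by rewrite h mxE.
  by split; apply/eqP; [have := at_i 0 | have := at_i 1 | have := at_i 2];
    rewrite mxE.
apply/matrixP => i j; rewrite !mxE.
by case: i => [[|[|[|i]]] ?] //=; rewrite nth_nil.
Qed.

Lemma Mk_qform_col3 (R : comNzRingType) (k : nat) (a b c u v w : R) :
  let x := col3 k u v w in
  (x^T *m Mk k.+2 a b c *m x) 0 0
    = a * (u ^+ 2 + v ^+ 2 + w ^+ 2) + 2 * b * (u * v + u * w) + 2 * c * (v * w).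
Proof.
move=> x.
have x_tail (i : 'I_k) : x (lift ord0 (lift ord0 (lift ord0 i))) 0 = 0.
  by rewrite /x mxE /= nth_nil.
have xTM (j : 'I_k.+3) :
    (x^T *m Mk k.+2 a b c) 0 j = \sum_(i < k.+3) x i 0 * Mk k.+2 a b c i j.
  by rewrite mxE; apply: eq_bigr => i _; rewrite mxE.
rewrite mxE !big_ord_recl big1; last by move=> i _; rewrite x_tail mulr0.
rewrite !xTM !big_ord_recl !big1; try by move=> i _; rewrite x_tail mul0r.
by rewrite /x /Mk !mxE /=; ring.
Qed.

Lemma posdef_Mk_qform_gt0 (R : realFieldType) (k : nat) (a b c u v w : R) :
  posdef (Mk k.+2 a b c) -> [|| u != 0, v != 0 | w != 0] ->
  0 < a * (u ^+ 2 + v ^+ 2 + w ^+ 2) + 2 * b * (u * v + u * w) + 2 * c * (v * w).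
Proof.
move=> [_ pos] nz; rewrite -(Mk_qform_col3 k); apply: pos.
rewrite col3_eq0; apply: contraL nz => /and3P[/eqP-> /eqP-> /eqP->].
by rewrite eqxx.
Qed.

Lemma posdef_Mk_coef_bounds (R : realFieldType) (k : nat) (a b c : R) :
  posdef (Mk k.+2 a b c) ->
  [/\ `|b| < a, `|c| < a & 2 * b ^+ 2 < a * (a + c)].
Proof.
move=> pd; have Q u v w := @posdef_Mk_qform_gt0 R k a b c u v w pd.
have Qv u v w (v_nz : v != 0) := Q u v w (introT or3P (Or32 _ _ v_nz)).
have e1 := Qv 0 1 0 (oner_neq0 R).
have e1De2 := Qv 0 1 1 (oner_neq0 R).
have e1Be2 := Qv 0 1 (-1) (oner_neq0 R).
have e0De1 := Qv 1 1 0 (oner_neq0 R).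
have e0Be1 := Qv (-1) 1 0 (oner_neq0 R).
have a_gt0 : 0 < a by nra.
have key := Qv (- (2 * b)) a a (lt0r_neq0 a_gt0).
by split; [rewrite ltr_norml; apply/andP; split; nra.. | nra].
Qed.

Lemma sqr_sub_gt0_norm (R : realDomainType) (a b : R) :
  `|b| < a -> 0 < a ^+ 2 - b ^+ 2.
Proof. by move=> b_lt; rewrite subr_gt0 -real_normK ?num_real // ltrXn2r. Qed.

Lemma norm_Mk_ratio_f_le2 (R : realFieldType) (a b c : R) :
  `|b| < a -> `|c| < a -> 2 * b ^+ 2 < a * (a + c) ->
  `|b * (a - c) / (a ^+ 2 - b ^+ 2)| <= 2.
Proof.
move=> b_lt /ltr_normlW c_lt key.
have den_gt0 := sqr_sub_gt0_norm b_lt.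
rewrite normrM normfV (gtr0_norm den_gt0) ler_pdivrMr //.
rewrite normrM (gtr0_norm (_ : 0 < a - c)) ?subr_gt0 //.
have b_ac : `|b| * (a - c) <= a * (a - c) by rewrite ler_pM2r ?subr_gt0 // ltW.
lra.
Qed.

Lemma norm_Mk_ratio_g_le1 (R : realFieldType) (a b c : R) :
  `|b| < a -> `|c| < a -> 2 * b ^+ 2 < a * (a + c) ->
  `|(a * c - b ^+ 2) / (a ^+ 2 - b ^+ 2)| <= 1.
Proof.
move=> b_lt /ltr_normlW c_lt key.
have a_gt0 : 0 < a := le_lt_trans (normr_ge0 b) b_lt.
have den_gt0 := sqr_sub_gt0_norm b_lt.
rewrite normrM normfV (gtr0_norm den_gt0) ler_pdivrMr // mul1r.
by rewrite ler_norml; apply/andP; split; nra.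
Qed.

Theorem lemma4p8 (R : realType) (kappa : nat) (A : 'M[R]_(kappa.+1)) (a b c : R) :
  (2 <= kappa)%N -> Mkplus A -> A = Mk kappa a b c ->
  Num.max `|b| `|c| < a /\
  `| b * (a - c) / (a ^+ 2 - b ^+ 2) | <= 2 /\
  `| (a * c - b ^+ 2) / (a ^+ 2 - b ^+ 2) | <= 1.
Proof.
case: kappa A => [|[|k]] A // _ [pd _] eA; rewrite {}eA in pd.
have [b_lt c_lt key] := posdef_Mk_coef_bounds pd.
split; first by rewrite gt_max b_lt c_lt.
by split; [exact: norm_Mk_ratio_f_le2 | exact: norm_Mk_ratio_g_le1].
Qed.
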